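(* Assume (A1), (A2), (A3) below, let $r\in\mathcal R_\epsilon$, $x_0\in\mathcal D_x(r)$, let $p$ be the fixed planned path, and consider the closed-loop PathFG+MPC trajectory $s_{k+1}=g(\tilde\xi_N^*(x_k,s_k))$, $x_{k+1}=f(x_k,\tilde\kappa(x_k,s_k))$ from an initial condition $(x_0,s_0)\in\tilde\Gamma$. Then there is $k_M\ge0$ such that $s_k=1$ for all $k\ge k_M+1$.
   Context: System: $x_{k+1}=f(x_k,u_k)$, $x_k\in\mathbb R^{n_x}$, $u_k\in\mathbb R^{n_u}$, with $\mathcal X=\{x:h_x(x)\le0\}$, $\mathcal U=\{u:h_u(u)\le0\}$. (A1) $f$ is locally Lipschitz, $h_x,h_u$ are continuous, and there are a set $\mathcal R\subseteq\mathbb R^{n_r}$ and continuous maps $r\mapsto\bar x_r\in\mathcal X$, $r\mapsto\bar u_r\in\mathcal U$ with $\bar x_r=f(\bar x_r,\bar u_r)$. For fixed $\epsilon>0$, $\mathcal R_\epsilon=\{r\in\mathcal R:h_x(\bar x_r)\le-\epsilon,\ h_u(\bar u_r)\le-\epsilon\}$. MPC: horizon $N\in\mathbb N_{>0}$, stage cost $\ell:\mathcal X\times\mathcal U\times\mathcal R_\epsilon\to\mathbb R_{\ge0}$, terminal set $\mathcal T\subseteq\mathcal X\times\mathcal R$, terminal cost $V:\mathcal T\to\mathbb R_{\ge0}$. The OCP at $(x,r)$: minimize $V(\xi_N,r)+\sum_{i=0}^{N-1}\ell(\xi_i,\mu_i,r)$ subject to $\xi_0=x$, $\xi_{i+1}=f(\xi_i,\mu_i)$,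 $\xi_i\in\mathcal X$, $\mu_i\in\mathcal U$ ($i=0,\dots,N-1$), $(\xi_N,r)\in\mathcal T$. $\Gamma=\{(x,r)\in\mathcal X\times\mathcal R_\epsilon:$ OCP feasible$\}$; $\zeta^*(x,r)=(\xi_0^*,\dots,\xi_N^*,\mu_0^*,\dots,\mu_{N-1}^* )$ is the minimizer (treated as a function), $\xi_N^*(x,r)$ its final state, $\kappa(x,r)=\mu_0^*(x,r)$. (A2) (a) $\ell$ uniformly continuous, $\ell(\bar x_r,\bar u_r,r)=0$, $\ell(x,u,r)\ge\gamma_\ell(\|x-\bar x_r\|)$ for some $\gamma_\ell\in\mathcal K_\infty$, all $(x,r)\in\Gamma$, $u\in\mathcal U$. (b) $V$ uniformly continuous, $V(\bar x_r,r)=0$, $V\ge0$ on $\mathcal T$, and some $\kappa_T:\mathcal T\to\mathcal U$ satisfies $V(f(x,\kappa_T(x,r)),r)-V(x,r)\le-\ell(x,\kappa_T(x,r),r)$ on $\mathcal T$. (c) $(x,r)\in\mathcal T\Rightarrow(f(x,\kappa_T(x,r)),r)\in\mathcal T$, $x\in\mathcal X$, $\kappa_T(x,r)\in\mathcal U$. (d) $(\bar x_r,r)\in\operatorname{int}\mathcal T$ for all $r\in\mathcal R_\epsilon$. (e) $\zeta^*$ is Lipschitz continuous. Paths: a feasible path for $(x_0,r)$, $r\in\mathcal R_\epsilon$, is $\{p(s):s\in[0,1]\}$ with $p:[0,1]\to\mathcal R_\epsilon$ continuous, $(x_0,p(0))\in\Gamma$, $p(1)=r$; $\mathcal D_x(r)$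 is the set of $x_0$ for which such a path exists. (A3) For such $(x_0,r)$ the planner returns a feasible path. With $p$ fixed: $\tilde{\mathcal T}=\{(x,s):(x,p(s))\in\mathcal T\}$, $\tilde\Gamma=\{(x,s):(x,p(s))\in\Gamma\}$, $\tilde\xi_N^*(x,s)=\xi_N^*(x,p(s))$, $\tilde\kappa(x,s)=\kappa(x,p(s))$, and $g(\xi)=\max\{s\in[0,1]:(\xi,s)\in\tilde{\mathcal T}\}$. *)

From HB Require Import structures.
From mathcomp Require Import all_boot all_order all_algebra.
From mathcomp Require Import all_classical all_reals all_analysis.
Set Implicit Arguments. Unset Strict Implicit. Unset Printing Implicit Defensive.
Import Order.TTheory GRing.Theory Num.Theory.
Import numFieldNormedType.Exports.
Local Open Scope classical_set_scope.
Local Open Scope ring_scope.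

Definition constr_set (R : realType) n m (h : 'rV[R]_n -> 'rV[R]_m)
  : set 'rV[R]_n := [set x | forall i, h x ord0 i <= 0].

Definition Reps (R : realType) nx nu nr mx mu (Rset : set 'rV[R]_nr)
  (xbar : 'rV[R]_nr -> 'rV[R]_nx) (ubar : 'rV[R]_nr -> 'rV[R]_nu)
  (hx : 'rV[R]_nx -> 'rV[R]_mx) (hu : 'rV[R]_nu -> 'rV[R]_mu) (eps : R)
  : set 'rV[R]_nr :=
  [set r | Rset r /\ (forall i, hx (xbar r) ord0 i <= - eps)
                  /\ (forall i, hu (ubar r) ord0 i <= - eps)].

Definition locally_lipschitz2 (R : realType) nx nu
  (f : 'rV[R]_nx -> 'rV[R]_nu -> 'rV[R]_nx) : Prop :=
  forall x u, exists2 d : R, 0 < d & exists L : R,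
    forall x1 x2 u1 u2, `|x1 - x| < d -> `|x2 - x| < d ->
      `|u1 - u| < d -> `|u2 - u| < d ->
      `|f x1 u1 - f x2 u2| <= L * (`|x1 - x2| + `|u1 - u2|).

Definition unif_cont3_on (R : realType) a b c
  (D : 'rV[R]_a -> 'rV[R]_b -> 'rV[R]_c -> Prop)
  (l : 'rV[R]_a -> 'rV[R]_b -> 'rV[R]_c -> R) : Prop :=
  forall e : R, 0 < e -> exists2 d : R, 0 < d &
    forall x1 u1 r1 x2 u2 r2, D x1 u1 r1 -> D x2 u2 r2 ->
      `|x1 - x2| < d -> `|u1 - u2| < d -> `|r1 - r2| < d ->
      `|l x1 u1 r1 - l x2 u2 r2| < e.

Definition unif_cont2_on (R : realType) a c
  (D : set ('rV[R]_a * 'rV[R]_c)) (V : 'rV[R]_a -> 'rV[R]_c -> R) : Prop :=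
  forall e : R, 0 < e -> exists2 d : R, 0 < d &
    forall x1 r1 x2 r2, D (x1, r1) -> D (x2, r2) ->
      `|x1 - x2| < d -> `|r1 - r2| < d -> `|V x1 r1 - V x2 r2| < e.

Definition K_infty (R : realType) (g : R -> R) : Prop :=
  g 0 = 0 /\ {within [set s : R | 0 <= s], continuous g} /\
  (forall a b, 0 <= a -> a < b -> g a < g b) /\
  (forall M : R, exists2 a, 0 <= a & M < g a).

(* Feasibility of the candidate (xi_0..xi_N, mu_0..mu_{N-1}) for the OCP at (x,r).
   Sequences are indexed by nat; only indices <= N (states), < N (inputs) matter. *)
Definition ocp_feasible (R : realType) nx nu nr
  (f : 'rV[R]_nx -> 'rV[R]_nu -> 'rV[R]_nx) (X : set 'rV[R]_nx)
  (U : set 'rV[R]_nu) (T : set ('rV[R]_nx * 'rV[R]_nr)) (N : nat)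
  (x : 'rV[R]_nx) (r : 'rV[R]_nr)
  (xi : nat -> 'rV[R]_nx) (mu : nat -> 'rV[R]_nu) : Prop :=
  xi 0%N = x /\
  (forall i, (i < N)%N -> xi i.+1 = f (xi i) (mu i) /\ X (xi i) /\ U (mu i)) /\
  T (xi N, r).

Definition ocp_cost (R : realType) nx nu nr
  (l : 'rV[R]_nx -> 'rV[R]_nu -> 'rV[R]_nr -> R)
  (V : 'rV[R]_nx -> 'rV[R]_nr -> R) (N : nat) (r : 'rV[R]_nr)
  (xi : nat -> 'rV[R]_nx) (mu : nat -> 'rV[R]_nu) : R :=
  V (xi N) r + \sum_(i < N) l (xi i) (mu i) r.

Definition Gamma_set (R : realType) nx nu nr
  (f : 'rV[R]_nx -> 'rV[R]_nu -> 'rV[R]_nx) (X : set 'rV[R]_nx)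
  (U : set 'rV[R]_nu) (Re : set 'rV[R]_nr) (T : set ('rV[R]_nx * 'rV[R]_nr))
  (N : nat) : set ('rV[R]_nx * 'rV[R]_nr) :=
  [set xr | X xr.1 /\ Re xr.2 /\
            exists xi mu, ocp_feasible f X U T N xr.1 xr.2 xi mu].

(* s is the value g(xi) = max {s in [0,1] : (xi, p(s)) in T}
   (i.e. (xi,s) in tilde T), read as "the maximum exists and equals s". *)
Definition is_g (R : realType) nx nr (T : set ('rV[R]_nx * 'rV[R]_nr))
  (p : R -> 'rV[R]_nr) (xi : 'rV[R]_nx) (s : R) : Prop :=
  (0 <= s <= 1) /\ T (xi, p s) /\
  (forall s', 0 <= s' <= 1 -> T (xi, p s') -> s' <= s).

(* Recursive feasibility: the optimal plan at step k, shifted by one step and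
   completed by the terminal control law, is feasible at step k + 1.  Hence the
   closed loop stays in Gamma, and s_k is nondecreasing (by the terminal
   constraint, s_k is admissible in the max defining s_(k+1)) and bounded by 1,
   so it converges to some sigma.  If s_k never reached 1, then near sigma the
   reference p(s_k) moves so little that, while x_k stays eta-far from the steady
   state xbar(p(s_k)), the optimal cost drops by a fixed amount at each step,
   which a nonnegative quantity cannot do forever.  So x_k eventually comes
   eta-close to xbar(p(s_k)); as the optimal terminal state is Lipschitz and
   equals xbar(q) when started at xbar(q), it then lies in a ball around
   (xbar(p(sigma)), p(sigma)) contained in the terminal set, and g pushes
   s_(k+1) beyond sigma or up to 1, a contradiction either way. *)

From HB Require Import structures.
From mathcomp Require Import all_boot all_order all_algebra.
From mathcomp Require Import all_classical all_reals all_analysis.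
Import Order.TTheory GRing.Theory Num.Theory.
Import numFieldNormedType.Exports.
Local Open Scope classical_set_scope.
Local Open Scope ring_scope.

From mathcomp Require Import lra.

Set Implicit Arguments.
Unset Strict Implicit.

Lemma interior_prod_ball (R : numFieldType) (U V : normedModType R)
    (A : set (U * V)) a b :
  interior A (a, b) ->
  exists2 rho : R, 0 < rho & forall y q, `|a - y| < rho -> `|b - q| < rho -> A (y, q).
Proof.
move=> /nbhs_ballP [rho rho_gt0 ballA]; exists rho => // y q ay bq.
by apply: ballA; split; rewrite /= -ball_normE.
Qed.

Lemma continuous_within_dist_lt (R : numFieldType) (U V : normedModType R) (A : set U)
    (g : U -> V) a :
  {within A, continuous g} -> A a -> forall e, 0 < e ->
  exists2 d : R, 0 < d & forall y, A y -> `|a - y| < d -> `|g a - g y| < e.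
Proof.
move=> g_cont Aa e e_gt0.
have : within A (nbhs a) (g @^-1` ball (g a) e).
  by rewrite nbhs_subspace_in //; apply: g_cont; apply: nbhsx_ballx.
move=> /nbhs_ballP [d d_gt0 dball]; exists d => // y Ay ay.
by have := dball y; rewrite /= -!ball_normE; apply.
Qed.

Lemma no_uniform_descent (R : archiRealFieldType) (u : nat -> R) (c : R) (K : nat) :
  0 < c -> (forall k, 0 <= u k) -> ~ (forall k, (K <= k)%N -> u k.+1 <= u k - c).
Proof.
move=> c_gt0 u_ge0 descent.
have iter_descent m : u (K + m)%N <= u K - m%:R * c.
  elim: m => [|m IH]; first by rewrite addn0 mul0r subr0.
  have := descent (K + m)%N (leq_addr _ _).
  rewrite addnS -natr1 mulrDl mul1r; lra.
have := archi_boundP (divr_ge0 (u_ge0 K) (ltW c_gt0)).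
rewrite ltr_pdivrMr // => bound_gt.
have := iter_descent (Num.bound (u K / c)).
have := u_ge0 (K + Num.bound (u K / c))%N; lra.
Qed.

Lemma K_infty_gt0 (R : realType) (g : R -> R) a : K_infty g -> 0 < a -> 0 < g a.
Proof. by move=> [g0 [_ [g_incr _]]] a_gt0; rewrite -g0; apply: g_incr. Qed.

Lemma K_infty_le (R : realType) (g : R -> R) a b :
  K_infty g -> 0 <= a -> a <= b -> g a <= g b.
Proof.
move=> [_ [_ [g_incr _]]] a_ge0; rewrite le_eqVlt => /predU1P [-> // | ab].
exact/ltW/g_incr.
Qed.

Lemma K_infty_eq0 (R : realType) (g : R -> R) a :
  K_infty g -> 0 <= a -> g a <= 0 -> a = 0.
Proof.
move=> gK; rewrite le_eqVlt => /predU1P [// | a_gt0].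
by rewrite leNgt K_infty_gt0.
Qed.

Lemma dist_lt_le_add (R : realDomainType) (a b e : R) : `|a - b| < e -> a <= b + e.
Proof. by rewrite ltr_distl => /andP [_ /ltW]. Qed.

Section OptimalControlProblem.
Variables (R : realType) (nx nu nr : nat).
Variables (f : 'rV[R]_nx -> 'rV[R]_nu -> 'rV[R]_nx) (X : set 'rV[R]_nx)
  (U : set 'rV[R]_nu) (T : set ('rV[R]_nx * 'rV[R]_nr)).
Variables (l : 'rV[R]_nx -> 'rV[R]_nu -> 'rV[R]_nr -> R)
  (V : 'rV[R]_nx -> 'rV[R]_nr -> R) (kappaT : 'rV[R]_nx -> 'rV[R]_nr -> 'rV[R]_nu).

Definition ocp_minimizer (Re : set 'rV[R]_nr) (N : nat)
    (zx : 'rV[R]_nx -> 'rV[R]_nr -> nat -> 'rV[R]_nx)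
    (zu : 'rV[R]_nx -> 'rV[R]_nr -> nat -> 'rV[R]_nu) :=
  forall y q, Gamma_set f X U Re T N (y, q) ->
    ocp_feasible f X U T N y q (zx y q) (zu y q) /\
    forall xi mu, ocp_feasible f X U T N y q xi mu ->
      ocp_cost l V N q (zx y q) (zu y q) <= ocp_cost l V N q xi mu.

Definition shift_states N (xi : nat -> 'rV[R]_nx) u i :=
  if i == N then f (xi N) u else xi i.+1.

Definition shift_inputs N (mu : nat -> 'rV[R]_nu) u i :=
  if i.+1 == N then u else mu i.+1.

Lemma ocp_feasible_state1 N y q xi mu : (0 < N)%N ->
  ocp_feasible f X U T N y q xi mu -> X y /\ xi 1%N = f y (mu 0%N).
Proof. by move=> N_gt0 [<- [dyn _]]; have [-> [Xy _]] := dyn 0%N N_gt0. Qed.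

Lemma ocp_feasible_shift N y q q' xi mu u : (0 < N)%N ->
  ocp_feasible f X U T N y q xi mu ->
  T (f (xi N) u, q') -> X (xi N) -> U u ->
  ocp_feasible f X U T N (xi 1%N) q' (shift_states N xi u) (shift_inputs N mu u).
Proof.
move=> N_gt0 [xi0 [dyn _]] Tq' XN Uu; split; last split.
- by rewrite /shift_states; case: eqP => // N0; rewrite -N0 in N_gt0.
- move=> i iN; rewrite /shift_states /shift_inputs (ltn_eqF iN).
  case: (eqVneq i.+1 N) => [-> // | ne].
  by apply: dyn; rewrite ltn_neqAle ne.
- by rewrite /shift_states eqxx.
Qed.

Hypothesis T_invariant : forall y q, T (y, q) ->
  T (f y (kappaT y q), q) /\ X y /\ U (kappaT y q).

Lemma Gamma_set_terminal (Re : set 'rV[R]_nr) N y q :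
  T (y, q) -> Re q -> Gamma_set f X U Re T N (y, q).
Proof.
move=> Tyq Req; split; first by have [_ []] := T_invariant Tyq.
split=> //; pose xi i := iter i (fun z => f z (kappaT z q)) y.
have Txi i : T (xi i, q) by elim: i => [|i IH] //=; have [] := T_invariant IH.
exists xi, (fun i => kappaT (xi i) q); do 2!split => //.
by move=> i _; have [_ []] := T_invariant (Txi i).
Qed.

Hypothesis V_decrease : forall y q, T (y, q) ->
  V (f y (kappaT y q)) q - V y q <= - l y (kappaT y q) q.

Lemma ocp_cost_shift_le N q q' xi mu e : (0 < N)%N -> T (xi N, q') ->
  V (xi N) q' <= V (xi N) q + e ->
  (forall i, (i < N)%N -> l (xi i) (mu i) q' <= l (xi i) (mu i) q + e) ->
  ocp_cost l V N q' (shift_states N xi (kappaT (xi N) q'))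
                    (shift_inputs N mu (kappaT (xi N) q'))
    <= ocp_cost l V N q xi mu - l (xi 0%N) (mu 0%N) q + e *+ N.
Proof.
case: N => // n _ Tq' V_le l_le; set u := kappaT _ q'.
have shift_sum : \sum_(i < n) l (shift_states n.+1 xi u i) (shift_inputs n.+1 mu u i) q'
    <= \sum_(i < n) l (xi i.+1) (mu i.+1) q + e *+ n.
  rewrite -[e *+ n]mulr1n -[n in e *+ n]card_ord -sumr_const -big_split /=.
  apply: ler_sum => i _; have i_lt := ltn_ord i.
  have i_le : (i < n.+1)%N := ltnW i_lt.
  rewrite /shift_states /shift_inputs eqSS !ltn_eqF //.
  by apply: l_le; rewrite ltnS.
have cost_recl : \sum_(i < n.+1) l (xi i) (mu i) q =
    l (xi 0%N) (mu 0%N) q + \sum_(i < n) l (xi i.+1) (mu i.+1) q by rewrite big_ord_recl.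
have last_state : shift_states n.+1 xi u n = xi n.+1 by rewrite /shift_states ltn_eqF.
have last_input : shift_inputs n.+1 mu u n = u by rewrite /shift_inputs eqxx.
have end_state : shift_states n.+1 xi u n.+1 = f (xi n.+1) u.
  by rewrite /shift_states eqxx.
rewrite /ocp_cost big_ord_recr /= cost_recl last_state last_input end_state.
have := V_decrease Tq'; rewrite -/u mulrS; lra.
Qed.

End OptimalControlProblem.

Section ClosedLoop.
Variables (R : realType) (nx nu nr : nat).
Variables (f : 'rV[R]_nx -> 'rV[R]_nu -> 'rV[R]_nx) (X : set 'rV[R]_nx)
  (U : set 'rV[R]_nu) (Re : set 'rV[R]_nr) (T : set ('rV[R]_nx * 'rV[R]_nr))
  (N : nat).
Variables (l : 'rV[R]_nx -> 'rV[R]_nu -> 'rV[R]_nr -> R)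
  (V : 'rV[R]_nx -> 'rV[R]_nr -> R) (kappaT : 'rV[R]_nx -> 'rV[R]_nr -> 'rV[R]_nu).
Variables (xbar : 'rV[R]_nr -> 'rV[R]_nx) (ubar : 'rV[R]_nr -> 'rV[R]_nu)
  (gamma_l : R -> R).
Variables (zx : 'rV[R]_nx -> 'rV[R]_nr -> nat -> 'rV[R]_nx)
  (zu : 'rV[R]_nx -> 'rV[R]_nr -> nat -> 'rV[R]_nu) (L : R).
Variables (p : R -> 'rV[R]_nr) (x : nat -> 'rV[R]_nx) (s : nat -> R).

Local Notation Gam := (Gamma_set f X U Re T N).

Hypothesis N_gt0 : (0 < N)%N.
Hypothesis steady_state : forall q, Re q ->
  X (xbar q) /\ U (ubar q) /\ xbar q = f (xbar q) (ubar q).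
Hypothesis xbar_cont : {within Re, continuous xbar}.
Hypothesis l_ge0 : forall y u q, X y -> U u -> Re q -> 0 <= l y u q.
Hypothesis V_ge0 : forall y q, T (y, q) -> 0 <= V y q.
Hypothesis zeta_min : ocp_minimizer f X U T l V Re N zx zu.
Hypothesis l_unif : unif_cont3_on (fun y u q => X y /\ U u /\ Re q) l.
Hypothesis l_steady : forall q, Re q -> l (xbar q) (ubar q) q = 0.
Hypothesis gamma_K : K_infty gamma_l.
Hypothesis l_lower : forall y u q, Gam (y, q) -> U u ->
  gamma_l `|y - xbar q| <= l y u q.
Hypothesis V_unif : unif_cont2_on T V.
Hypothesis V_steady : forall q, Re q -> V (xbar q) q = 0.
Hypothesis V_decrease : forall y q, T (y, q) ->
  V (f y (kappaT y q)) q - V y q <= - l y (kappaT y q) q.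
Hypothesis T_invariant : forall y q, T (y, q) ->
  T (f y (kappaT y q), q) /\ X y /\ U (kappaT y q).
Hypothesis steady_interior : forall q, Re q -> interior T (xbar q, q).
Hypothesis zx_lipschitz : forall y1 q1 y2 q2, Gam (y1, q1) -> Gam (y2, q2) ->
  `|zx y1 q1 N - zx y2 q2 N| <= L * (`|y1 - y2| + `|q1 - q2|).
Hypothesis p_cont : {within [set t | 0 <= t <= 1], continuous p}.
Hypothesis p_Re : forall t, 0 <= t <= 1 -> Re (p t).
Hypothesis s0_range : 0 <= s 0%N <= 1.
Hypothesis x0_Gam : Gam (x 0%N, p (s 0%N)).
Hypothesis closed_loop : forall k,
  is_g T p (zx (x k) (p (s k)) N) (s k.+1) /\
  x k.+1 = f (x k) (zu (x k) (p (s k)) 0%N).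

Lemma steady_Gamma q : Re q -> Gam (xbar q, q).
Proof.
move=> Req; apply: (Gamma_set_terminal T_invariant) => //.
exact: nbhs_singleton (steady_interior Req).
Qed.

Lemma optimal_terminal_state_steady q : Re q -> zx (xbar q) q N = xbar q.
Proof.
move=> Req; have [Xb [Ub fb]] := steady_state Req.
have [[_ [dyn TN]] opt] := zeta_min (steady_Gamma Req).
set xi := zx _ _ in dyn TN opt *; set mu := zu _ _ in dyn opt.
have const_feasible :
    ocp_feasible f X U T N (xbar q) q (fun=> xbar q) (fun=> ubar q).
  by do 2!split => //; exact: nbhs_singleton (steady_interior Req).
have cost_le0 : ocp_cost l V N q xi mu <= 0.
  apply: le_trans (opt _ _ const_feasible) _.
  by rewrite /ocp_cost V_steady // big1 ?addr0 // => i _; apply: l_steady.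
have sum_ge0 : 0 <= \sum_(i < N) l (xi i) (mu i) q.
  by apply: sumr_ge0 => i _; have [_ [Xi Ui]] := dyn i (ltn_ord i); apply: l_ge0.
have [TN' [_ UN]] := T_invariant TN.
have l_le0 : l (xi N) (kappaT (xi N) q) q <= 0.
  by have := V_decrease TN; have := V_ge0 TN'; rewrite /ocp_cost in cost_le0; lra.
have := le_trans (l_lower (Gamma_set_terminal T_invariant N TN Req) UN) l_le0.
by move=> /(K_infty_eq0 gamma_K (normr_ge0 _)) /normr0_eq0 /subr0_eq.
Qed.

Lemma terminal_state_dist y q : Gam (y, q) -> Re q ->
  `|zx y q N - xbar q| <= L * `|y - xbar q|.
Proof.
move=> Gyq Req; have := zx_lipschitz Gyq (steady_Gamma Req).
by rewrite optimal_terminal_state_steady // subrr normr0 addr0.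
Qed.

Lemma closed_loop_next_state k : Gam (x k, p (s k)) ->
  x k.+1 = zx (x k) (p (s k)) 1%N.
Proof.
move=> Gk; have [feas _] := zeta_min Gk.
by have [_ ->] := ocp_feasible_state1 N_gt0 feas; have [_ ->] := closed_loop k.
Qed.

Lemma closed_loop_feasible k : 0 <= s k <= 1 /\ Gam (x k, p (s k)).
Proof.
elim: k => [|k [_ Gk]]; first by [].
have [feas _] := zeta_min Gk; have [[sk1 [TN _]] _] := closed_loop k.
have [TN' [XN UN]] := T_invariant TN.
have next_feas := ocp_feasible_shift N_gt0 feas TN' XN UN.
rewrite -closed_loop_next_state // in next_feas.
split=> //; split; first by have [] := ocp_feasible_state1 N_gt0 next_feas.
by split; [exact: p_Re | do 2!eexists; exact: next_feas].
Qed.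

Lemma closed_loop_nondecreasing : nondecreasing_seq s.
Proof.
apply/nondecreasing_seqP => k; have [sk Gk] := closed_loop_feasible k.
have [[_ [_ TN]] _] := zeta_min Gk; have [[_ [_ s_max]] _] := closed_loop k.
exact: s_max.
Qed.

Definition closed_loop_value k :=
  ocp_cost l V N (p (s k)) (zx (x k) (p (s k))) (zu (x k) (p (s k))).

Lemma closed_loop_value_ge0 k : 0 <= closed_loop_value k.
Proof.
have [sk Gk] := closed_loop_feasible k; have [[_ [dyn TN]] _] := zeta_min Gk.
rewrite /closed_loop_value /ocp_cost addr_ge0 ?V_ge0 //.
apply: sumr_ge0 => i _; have [_ [Xi Ui]] := dyn i (ltn_ord i).
by apply: l_ge0 => //; apply: p_Re.
Qed.

Lemma closed_loop_value_step e : 0 < e -> exists2 d : R, 0 < d &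
  forall k, `|p (s k.+1) - p (s k)| < d ->
    closed_loop_value k.+1 <=
    closed_loop_value k - l (x k) (zu (x k) (p (s k)) 0%N) (p (s k)) + e *+ N.
Proof.
move=> e_gt0; have [dl dl_gt0 l_close] := l_unif e_gt0.
have [dV dV_gt0 V_close] := V_unif e_gt0.
exists (Num.min dl dV) => [|k]; first by rewrite lt_min dl_gt0 dV_gt0.
rewrite lt_min => /andP [q_dl q_dV].
have [sk Gk] := closed_loop_feasible k; have [sk1 Gk1] := closed_loop_feasible k.+1.
have [[_ [TN _]] _] := closed_loop k; have [TN' [XN UN]] := T_invariant TN.
have [feas _] := zeta_min Gk; have [xi0 [dyn TNq]] := feas.
have shifted := ocp_feasible_shift N_gt0 feas TN' XN UN.
rewrite -closed_loop_next_state // in shifted.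
have [_ opt] := zeta_min Gk1; apply: le_trans (opt _ _ shifted) _.
rewrite -[x k in X in l X _ _]xi0; apply: (ocp_cost_shift_le V_decrease) => // [|i iN].
  by apply/dist_lt_le_add/V_close; rewrite ?subrr ?normr0.
have [_ [Xi Ui]] := dyn i iN.
by apply/dist_lt_le_add/l_close; rewrite ?subrr ?normr0 //; do 2!split => //; apply: p_Re.
Qed.

Lemma value_decrease_near sigma eta : 0 <= sigma <= 1 -> 0 < eta ->
  exists2 d : R, 0 < d & exists2 c : R, 0 < c & forall k,
    `|sigma - s k| < d -> `|sigma - s k.+1| < d ->
    eta <= `|x k - xbar (p (s k))| ->
    closed_loop_value k.+1 <= closed_loop_value k - c.
Proof.
move=> sigma01 eta_gt0; have g_gt0 := K_infty_gt0 gamma_K eta_gt0.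
have N_pos : 0 < N%:R :> R by rewrite ltr0n.
have half_g_gt0 : 0 < gamma_l eta / 2 by rewrite divr_gt0.
have [dq dq_gt0 step] := closed_loop_value_step (divr_gt0 half_g_gt0 N_pos).
have [d d_gt0 p_close] :=
  continuous_within_dist_lt p_cont sigma01 (divr_gt0 dq_gt0 (ltr0n _ 2)).
exists d => //; exists (gamma_l eta / 2) => //.
move=> k sk sk1 far; have [sk01 Gk] := closed_loop_feasible k.
have [sk1_01 _] := closed_loop_feasible k.+1.
have q_close : `|p (s k.+1) - p (s k)| < dq.
  have := p_close _ sk01 sk; have := p_close _ sk1_01 sk1.
  have := ler_distD (p sigma) (p (s k.+1)) (p (s k)).
  rewrite (distrC (p (s k.+1)) (p sigma)); lra.
have [[_ [dyn _]] _] := zeta_min Gk; have [_ [_ U0]] := dyn 0%N N_gt0.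
have l_big := le_trans (K_infty_le gamma_K (ltW eta_gt0) far) (l_lower Gk U0).
have := step k q_close; rewrite -[_ *+ N]mulr_natr divfK ?gt_eqF //; lra.
Qed.

Lemma terminal_state_near sigma rho : 0 <= sigma <= 1 -> 0 < rho ->
  exists2 d : R, 0 < d & exists2 eta : R, 0 < eta & forall k,
    `|sigma - s k| < d -> `|x k - xbar (p (s k))| < eta ->
    `|xbar (p sigma) - zx (x k) (p (s k)) N| < rho.
Proof.
move=> sigma01 rho_gt0; have half_rho_gt0 : 0 < rho / 2 by rewrite divr_gt0.
have [dx dx_gt0 xbar_close] :=
  continuous_within_dist_lt xbar_cont (p_Re sigma01) half_rho_gt0.
have [d d_gt0 p_close] := continuous_within_dist_lt p_cont sigma01 dx_gt0.
have L1_gt0 : 0 < `|L| + 1 by rewrite ltr_pwDr ?normr_ge0.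
exists d => //; exists (rho / 2 / (`|L| + 1)) => [|k sk xk]; first by rewrite divr_gt0.
have [sk01 Gk] := closed_loop_feasible k.
have xbar_near := xbar_close _ (p_Re sk01) (p_close _ sk01 sk).
have terminal_near := terminal_state_dist Gk (p_Re sk01).
have L_bound : L * `|x k - xbar (p (s k))| < rho / 2.
  rewrite ltr_pdivlMr // in xk.
  apply: le_lt_trans (ler_wpM2r (normr_ge0 _) (ler_norm L)) _.
  have := normr_ge0 L; have := normr_ge0 (x k - xbar (p (s k))); nra.
have := ler_distD (xbar (p (s k))) (xbar (p sigma)) (zx (x k) (p (s k)) N).
rewrite (distrC (xbar (p (s k)))); lra.
Qed.

Lemma path_advances_near sigma : 0 <= sigma <= 1 ->
  exists2 d : R, 0 < d & exists2 eta : R, 0 < eta & forall k,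
    `|sigma - s k| < d -> `|x k - xbar (p (s k))| < eta ->
    sigma < s k.+1 \/ s k.+1 = 1.
Proof.
move=> sigma01; have [rho rho_gt0 T_ball] :=
  interior_prod_ball (steady_interior (p_Re sigma01)).
have [d1 d1_gt0 p_close] := continuous_within_dist_lt p_cont sigma01 rho_gt0.
have [d d_gt0 [eta eta_gt0 terminal_near]] := terminal_state_near sigma01 rho_gt0.
exists d => //; exists eta => // k sk xk.
have [[_ [_ s_max]] _] := closed_loop k.
have [/andP [_ sk1_le1] _] := closed_loop_feasible k.+1.
have [t [t01 [t_close t_beyond]]] :
    exists t, 0 <= t <= 1 /\ `|sigma - t| < d1 /\ (sigma < t \/ t = 1).
  case: (lerP (sigma + d1 / 2) 1) => [le1 | gt1]; [exists (sigma + d1 / 2) | exists 1].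
    by rewrite ltr_distl; do !split; [apply/andP; split | apply/andP; split | left]; lra.
  by rewrite ltr_distl; do !split; [apply/andP; split | apply/andP; split | right]; lra.
have t_le := s_max t t01 (T_ball _ _ (terminal_near k sk xk) (p_close t t01 t_close)).
case: t_beyond => [sigma_t | t1]; first by left; lra.
by right; apply/eqP; rewrite eq_le sk1_le1 -t1.
Qed.

Lemma closed_loop_path_completes : exists kM, forall k, (kM.+1 <= k)%N -> s k = 1.
Proof.
have s_mono := closed_loop_nondecreasing.
have s_le1 k : s k <= 1 by have [/andP []] := closed_loop_feasible k.
have [[m sm1] | never1] := pselect (exists m, s m = 1).
  by exists m => k mk; apply/eqP; rewrite eq_le s_le1 -sm1 s_mono // ltnW.
exfalso.
have s_sup : has_sup (range s) by split; [exists (s 0%N), 0%N | exists 1 => _ [k _ <-]].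
set sigma := sup (range s).
have s_le_sigma k : s k <= sigma by apply: sup_upper_bound; last exists k.
have sigma01 : 0 <= sigma <= 1.
  have [/andP [s0_ge0 _] _] := closed_loop_feasible 0.
  rewrite (le_trans s0_ge0 (s_le_sigma 0%N)) /=.
  by apply: ge_sup; [case: s_sup | move=> _ [k _ <-]].
have [dA dA_gt0 [eta eta_gt0 advance]] := path_advances_near sigma01.
have [dB dB_gt0 [c c_gt0 decrease]] := value_decrease_near sigma01 eta_gt0.
have [K _ s_close] : \forall k \near \oo, `|sigma - s k| < Num.min dA dB.
  move/cvgrPdist_lt : (nondecreasing_cvgn s_mono s_sup.2); apply.
  by rewrite lt_min dA_gt0 dB_gt0.
have [k Kk xk_near] : exists2 k, (K <= k)%N & `|x k - xbar (p (s k))| < eta.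
  apply: contrapT => far.
  apply: (no_uniform_descent c_gt0 closed_loop_value_ge0 (K := K)).
  move=> k Kk; have := s_close k Kk; have := s_close k.+1 (leqW Kk).
  rewrite !lt_min => /andP [_ sk1] /andP [_ sk]; apply: decrease => //.
  by rewrite leNgt; apply/negP => near; apply: far; exists k.
have := s_close k Kk; rewrite lt_min => /andP [sk _].
have [sigma_lt | s1] := advance k sk xk_near.
  by have := s_le_sigma k.+1; lra.
by apply: never1; exists k.+1.
Qed.

End ClosedLoop.

Theorem lemma8 (R : realType) (nx nu nr mx mu : nat)
  (f : 'rV[R]_nx -> 'rV[R]_nu -> 'rV[R]_nx)
  (hx : 'rV[R]_nx -> 'rV[R]_mx) (hu : 'rV[R]_nu -> 'rV[R]_mu)
  (Rset : set 'rV[R]_nr)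
  (xbar : 'rV[R]_nr -> 'rV[R]_nx) (ubar : 'rV[R]_nr -> 'rV[R]_nu)
  (eps : R) (N : nat)
  (l : 'rV[R]_nx -> 'rV[R]_nu -> 'rV[R]_nr -> R)
  (T : set ('rV[R]_nx * 'rV[R]_nr)) (V : 'rV[R]_nx -> 'rV[R]_nr -> R)
  (kappaT : 'rV[R]_nx -> 'rV[R]_nr -> 'rV[R]_nu)
  (gamma_l : R -> R)
  (zx : 'rV[R]_nx -> 'rV[R]_nr -> nat -> 'rV[R]_nx)
  (zu : 'rV[R]_nx -> 'rV[R]_nr -> nat -> 'rV[R]_nu)
  (r : 'rV[R]_nr) (x0 : 'rV[R]_nx) (p : R -> 'rV[R]_nr)
  (s0 : R) (x : nat -> 'rV[R]_nx) (s : nat -> R) :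
  let X := constr_set hx in
  let U := constr_set hu in
  let Re := Reps Rset xbar ubar hx hu eps in
  let Gam := Gamma_set f X U Re T N in
  (* (A1) *)
  locally_lipschitz2 f ->
  continuous hx -> continuous hu ->
  {within Rset, continuous xbar} -> {within Rset, continuous ubar} ->
  (forall r', Rset r' -> X (xbar r') /\ U (ubar r') /\
                         xbar r' = f (xbar r') (ubar r')) ->
  0 < eps ->
  (* MPC data *)
  (0 < N)%N ->
  (forall x' u' r', X x' -> U u' -> Re r' -> 0 <= l x' u' r') ->
  (forall xr, T xr -> X xr.1 /\ Rset xr.2) ->
  (forall xr, T xr -> 0 <= V xr.1 xr.2) ->
  (* zeta* = (zx, zu) is a minimizer of the OCP on Gamma *)
  (forall x' r', Gam (x', r') ->
     ocp_feasible f X U T N x' r' (zx x' r') (zu x' r') /\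
     forall xi mu', ocp_feasible f X U T N x' r' xi mu' ->
       ocp_cost l V N r' (zx x' r') (zu x' r') <= ocp_cost l V N r' xi mu') ->
  (* (A2)(a) *)
  unif_cont3_on (fun x' u' r' => X x' /\ U u' /\ Re r') l ->
  (forall r', Re r' -> l (xbar r') (ubar r') r' = 0) ->
  K_infty gamma_l ->
  (forall x' u' r', Gam (x', r') -> U u' ->
     gamma_l `|x' - xbar r'| <= l x' u' r') ->
  (* (A2)(b) *)
  unif_cont2_on T V ->
  (forall r', Re r' -> V (xbar r') r' = 0) ->
  (forall x' r', T (x', r') ->
     V (f x' (kappaT x' r')) r' - V x' r' <= - l x' (kappaT x' r') r') ->
  (* (A2)(c) *)
  (forall x' r', T (x', r') ->
     T (f x' (kappaT x' r'), r') /\ X x' /\ U (kappaT x' r')) ->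
  (* (A2)(d) *)
  (forall r', Re r' -> (interior T) (xbar r', r')) ->
  (* (A2)(e): zeta* Lipschitz continuous (on Gamma) *)
  (exists L : R, forall x1 r1 x2 r2, Gam (x1, r1) -> Gam (x2, r2) ->
     (forall i, (i <= N)%N ->
        `|zx x1 r1 i - zx x2 r2 i| <= L * (`|x1 - x2| + `|r1 - r2|)) /\
     (forall i, (i < N)%N ->
        `|zu x1 r1 i - zu x2 r2 i| <= L * (`|x1 - x2| + `|r1 - r2|))) ->
  (* r in R_eps, and (A3): p is a feasible path for (x0, r) *)
  Re r ->
  {within [set t : R | 0 <= t <= 1], continuous p} ->
  (forall t, 0 <= t <= 1 -> Re (p t)) ->
  Gam (x0, p 0) -> p 1 = r ->
  (* initial condition (x0, s0) in tilde Gamma *)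
  0 <= s0 <= 1 -> Gam (x0, p s0) ->
  (* closed-loop PathFG+MPC trajectory *)
  x 0%N = x0 -> s 0%N = s0 ->
  (forall k, is_g T p (zx (x k) (p (s k)) N) (s k.+1) /\
             x k.+1 = f (x k) (zu (x k) (p (s k)) 0%N)) ->
  exists kM : nat, forall k, (kM.+1 <= k)%N -> s k = 1.
Proof.
move=> X U Re Gam _ _ _ xbar_cont _ steady _ N_gt0 l_ge0 _ V_ge0 zeta_min l_unif
  l_steady gamma_K l_lower V_unif V_steady V_decrease T_invariant steady_interior
  [L zeta_lipschitz] _ p_cont p_Re _ _ s0_range Gam_s0 x0_def s0_def closed_loop.
(* Unused: the regularity of f, hx, hu and ubar, 0 < eps, T <= X x Rset,
   Re r, the feasibility of p at 0 and p 1 = r; reaching s = 1 does not depend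
   on them. *)
apply: (closed_loop_path_completes N_gt0 (fun q Req => steady q (proj1 Req)) _
  l_ge0 _ zeta_min l_unif l_steady gamma_K l_lower V_unif V_steady V_decrease
  T_invariant steady_interior _ p_cont p_Re _ _ closed_loop).
- by apply: continuous_subspaceW xbar_cont => q [].
- by move=> y q; apply: (V_ge0 (y, q)).
- by move=> y1 q1 y2 q2 G1 G2; have [+ _] := zeta_lipschitz _ _ _ _ G1 G2; apply.
- by rewrite s0_def.
- by rewrite x0_def s0_def.
Qed.
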